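(* Let $f$ be an analytic function of the 5-complex variable $u$ on an open set, written $f(u)=\sum_{k=0}^4h_kP_k(x_0,x_1,x_2,x_3,x_4)$ with real-valued $P_k$ (and $h_0=1$). Then, with indices taken modulo 5, for every $k,m\in\{0,\dots,4\}$ and every $j\in\{0,\dots,4\}$, $$\frac{\partial P_{k+j}}{\partial x_j}=\frac{\partial P_k}{\partial x_0}$$ (e.g. $\partial P_0/\partial x_0=\partial P_1/\partial x_1=\dots=\partial P_4/\partial x_4$ and $\partial P_1/\partial x_0=\partial P_2/\partial x_1=\partial P_3/\partial x_2=\partial P_4/\partial x_3=\partial P_0/\partial x_4$), and $$\frac{\partial^2P_k}{\partial x_i\partial x_j}=\frac{\partial^2P_k}{\partial x_{i'}\partial x_{j'}}\quad\text{whenever } i+j\equiv i'+j'\pmod 5.$$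
   Context: A 5-complex number is $u=x_0+h_1x_1+h_2x_2+h_3x_3+h_4x_4$ with real $x_j$, with componentwise addition and the commutative associative bilinear multiplication determined by $h_jh_k=h_{(j+k)\bmod 5}$, $h_0=1$; identify it with the point $(x_0,\dots,x_4)\in\mathbb{R}^5$ and use the modulus $|u|=(\sum x_j^2)^{1/2}$. A 5-complex function $f$ is analytic if at each point $u_0$ of its domain the limit $f'(u_0)=\lim_{u\to u_0}\{f(u)-f(u_0)\}/(u-u_0)$ exists independently of the direction of approach (the quotient being taken with 5-complex multiplication by an inverse, along $u$ for which $u-u_0$ is invertible), with $f'$ again analytic (e.g. $f$ given locally by a convergent power series in $u$). *)

From HB Require Import structures.
From mathcomp Require Import all_boot all_order all_algebra.
From mathcomp Require Import all_classical all_reals all_analysis.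
Set Implicit Arguments. Unset Strict Implicit. Unset Printing Implicit Defensive.
Import Order.TTheory GRing.Theory Num.Theory.
Import numFieldNormedType.Exports.
Local Open Scope ring_scope.
Local Open Scope classical_set_scope.

(* A 5-complex number x0 + h1 x1 + ... + h4 x4 is the row vector (x0,...,x4).
   Indices live in 'I_5 with its cyclic (mod 5) additive structure. *)

(* 5-complex product: (u v)_k = sum_{i + j = k mod 5} u_i v_j,
   i.e. the bilinear product with h_j h_k = h_{(j+k) mod 5}. *)
Definition c5mul (R : realType) (u v : 'rV[R]_5) : 'rV[R]_5 :=
  \row_(k < 5) \sum_(i < 5) u ord0 i * v ord0 (k - i).

Definition c5one (R : realType) : 'rV[R]_5 :=
  \row_(k < 5) (if k == ord0 then 1 else 0).

Definition c5norm (R : realType) (u : 'rV[R]_5) : R :=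
  Num.sqrt (\sum_(i < 5) u ord0 i ^+ 2).

Definition c5e (R : realType) (j : 'I_5) : 'rV[R]_5 := delta_mx ord0 j.

(* L is the 5-complex derivative of f at u0:
   lim_{u -> u0} (f u - f u0) (u - u0)^{-1} = L, over all u with u - u0
   invertible (v ranging over inverses of u - u0). *)
Definition c5deriv_at (R : realType) (f : 'rV[R]_5 -> 'rV[R]_5)
  (u0 L : 'rV[R]_5) : Prop :=
  forall e : R, 0 < e -> exists2 d : R, 0 < d &
    forall u v : 'rV[R]_5, c5norm (u - u0) < d ->
      c5mul (u - u0) v = c5one R ->
      c5norm (c5mul (f u - f u0) v - L) < e.

(* f is analytic on D: f has a 5-complex derivative at every point of D,
   and the derivative is again analytic (iterated indefinitely). *)
Definition c5analytic (R : realType) (D : set 'rV[R]_5)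
  (f : 'rV[R]_5 -> 'rV[R]_5) : Prop :=
  exists F : nat -> 'rV[R]_5 -> 'rV[R]_5,
    F 0%N = f /\ forall (n : nat) (u : 'rV[R]_5), D u -> c5deriv_at (F n) u (F n.+1 u).

Definition c5comp (R : realType) (f : 'rV[R]_5 -> 'rV[R]_5) (k : 'I_5) :
  'rV[R]_5 -> R := fun x => f x ord0 k.

(** Approaching [u0] along the real line through [h_j], i.e. [u = u0 + t h_j],
    the increment [t h_j] has inverse [t^-1 h_(-j)], and multiplying by
    [h_(-j)] shifts coordinates cyclically.  Hence the [k]-th coordinate of
    the 5-complex derivative is the ordinary partial derivative
    [d P_(k+j) / d x_j], which is therefore independent of [j].  As [D] is
    open, this identifies [d P_k / d x_j] with the coordinate [k - j] of [f']
    on a neighbourhood of [u]; doing the same for [f'] shows that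
    [d^2 P_k / d x_i d x_j] is the coordinate [k - j - i] of [f''], which only
    depends on [i + j]. *)
From HB Require Import structures.
From mathcomp Require Import all_boot all_order all_algebra.
From mathcomp Require Import all_classical all_reals all_analysis.
Import Order.TTheory GRing.Theory Num.Theory.
Import numFieldNormedType.Exports.
Local Open Scope ring_scope.
Local Open Scope classical_set_scope.

Section FiveComplexBasis.
Context {R : realType}.

Lemma c5mulZe (w : 'rV[R]_5) (c : R) (m : 'I_5) :
  c5mul w (c *: c5e R m) = \row_k (c * w ord0 (k - m)).
Proof.
apply/rowP => k; rewrite !mxE (bigD1 (k - m)) //= big1 => [|i ni].
  by rewrite !mxE eqxx subKr eqxx mulr1 addr0 mulrC.
by rewrite !mxE eqxx subr_eq addrC -subr_eq eq_sym (negbTE ni) mulr0 mulr0.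
Qed.

Lemma c5mul_eV (t : R) (j : 'I_5) : t != 0 ->
  c5mul (t *: c5e R j) (t^-1 *: c5e R (- j)) = c5one R.
Proof.
move=> t0; apply/rowP => i; rewrite c5mulZe /c5e !mxE eqxx opprK.
rewrite -[X in i + j == X]add0r (inj_eq (addIr j)).
by case: (i == ord0); rewrite /= ?mulr1 ?mulr0 // mulVf.
Qed.

Lemma c5normZe (t : R) (j : 'I_5) : c5norm (t *: c5e R j) = `|t|.
Proof.
rewrite /c5norm /c5e (bigD1 j) //= big1 => [|i /negbTE ni].
  by rewrite !mxE !eqxx mulr1 addr0 sqrtr_sqr.
by rewrite !mxE ni mulr0 expr0n.
Qed.

Lemma c5norm_coord_le (x : 'rV[R]_5) (k : 'I_5) : `|x ord0 k| <= c5norm x.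
Proof.
rewrite /c5norm -sqrtr_sqr ler_sqrt; last by rewrite sumr_ge0 // => i _; rewrite sqr_ge0.
by rewrite (bigD1 k) //= lerDl sumr_ge0 // => i _; rewrite sqr_ge0.
Qed.

End FiveComplexBasis.

Section FiveComplexDerivative.
Context {R : realType} {g : 'rV[R]_5 -> 'rV[R]_5} {u0 L : 'rV[R]_5}.
Hypothesis gL : c5deriv_at g u0 L.

Lemma c5deriv_cvg_partial (k j : 'I_5) :
  (fun t : R => t^-1 *: ((c5comp g k \o shift u0) (t *: c5e R j) - c5comp g k u0))
     @ 0^' --> L ord0 (k - j).
Proof.
apply/cvgrPdist_lt => e e0; have [d d0 gLd] := gL e e0.
near=> t.
have t0 : t != 0 by near: t; exact: nbhs_dnbhs_neq.
have td : `|t| < d by near: t; exact: dnbhs0_lt.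
have := gLd (t *: c5e R j + u0) (t^-1 *: c5e R (- j)).
rewrite addrK c5normZe c5mul_eV // => /(_ td erefl).
move=> /(le_lt_trans (c5norm_coord_le _ (k - j))).
by rewrite distrC c5mulZe !mxE opprK subrK.
Unshelve. all: by end_near. Qed.

Lemma c5deriv_partial (k j : 'I_5) :
  derivable (c5comp g k) u0 (c5e R j) /\
  'D_(c5e R j) (c5comp g k) u0 = L ord0 (k - j).
Proof.
have gk := c5deriv_cvg_partial k j.
by split; [apply/cvg_ex; exists (L ord0 (k - j)) | exact: cvg_lim].
Qed.

End FiveComplexDerivative.

Section DerivativeTower.
Context {R : realType} {D : set 'rV[R]_5} {F : nat -> 'rV[R]_5 -> 'rV[R]_5}.
Hypotheses (openD : open D)
  (F_deriv : forall (n : nat) (u : 'rV[R]_5), D u -> c5deriv_at (F n) u (F n.+1 u)).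

Lemma c5deriv_tower_partial2 (n : nat) (u : 'rV[R]_5) (k i j : 'I_5) : D u ->
  derivable ('D_(c5e R j) (c5comp (F n) k)) u (c5e R i) /\
  'D_(c5e R i) ('D_(c5e R j) (c5comp (F n) k)) u = F n.+2 u ord0 (k - j - i).
Proof.
move=> Du.
have near_partial : \forall x \near u,
    c5comp (F n.+1) (k - j) x = 'D_(c5e R j) (c5comp (F n) k) x.
  have nD : \forall x \near u, D x by apply: open_nbhs_nbhs.
  by near=> x; rewrite (c5deriv_partial (F_deriv n x _) k j).2 //; near: x.
have [dF eF] := c5deriv_partial (F_deriv n.+1 u Du) (k - j) i.
split; first exact: near_eq_derivable near_partial dF.
by rewrite -(near_eq_derive _ near_partial) eF.
Unshelve. all: by end_near. Qed.

End DerivativeTower.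

Theorem mainTheorem9 (R : realType) (D : set 'rV[R]_5)
  (f : 'rV[R]_5 -> 'rV[R]_5) :
  open D -> c5analytic D f ->
  forall u : 'rV[R]_5, D u ->
  (forall k j : 'I_5,
     derivable (c5comp f (k + j)) u (c5e R j) /\
     derivable (c5comp f k) u (c5e R ord0) /\
     'D_(c5e R j) (c5comp f (k + j)) u = 'D_(c5e R ord0) (c5comp f k) u) /\
  (forall k i j i' j' : 'I_5, i + j = i' + j' ->
     derivable ('D_(c5e R j) (c5comp f k)) u (c5e R i) /\
     derivable ('D_(c5e R j') (c5comp f k)) u (c5e R i') /\
     'D_(c5e R i) ('D_(c5e R j) (c5comp f k)) u =
     'D_(c5e R i') ('D_(c5e R j') (c5comp f k)) u).
Proof.
move=> openD [F [<- F_deriv]] u Du; split.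
  move=> k j.
  have [dj ej] := c5deriv_partial (F_deriv 0 u Du) (k + j) j.
  have [d0 e0] := c5deriv_partial (F_deriv 0 u Du) k ord0.
  split; first exact: dj.
  split; first exact: d0.
  rewrite ej e0 addrK.
  by congr (F 1%N u ord0 _); exact: (esym (subr0 k)).
move=> k i j i' j' ij.
have [dij eij] := c5deriv_tower_partial2 openD F_deriv 0 u k i j Du.
have [dij' eij'] := c5deriv_tower_partial2 openD F_deriv 0 u k i' j' Du.
split; first exact: dij.
split; first exact: dij'.
rewrite eij eij'.
by rewrite -!addrA -!opprD [j + i]addrC [j' + i']addrC ij.
Qed.
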